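(* Let $p$ be a prime and $j,a,b\in\mathbb{N}$. Then \[c_j(p^{a+b})=\sum_{k=0}^{j-1}(-1)^{k-j+1}\binom{j}{k+1} d_{k+1}(p^b)\,\frac{(b+k+1)^{\overline a}}{(b+1)^{\overline a}}.\]
   Context: For $j,n\in\mathbb{N}$, $d_j(n)$ is the number of ordered $j$-tuples of positive integers with product $n$, and $c_j(n)$ is the number of ordered $j$-tuples of integers each $\ge 2$ with product $n$. The rising factorial is $x^{\overline a}=\prod_{i=0}^{a-1}(x+i)$. *)

From mathcomp Require Import all_boot all_order all_algebra.
Set Implicit Arguments. Unset Strict Implicit. Unset Printing Implicit Defensive.

(* d_j(n): number of ordered j-tuples of positive integers with product n.
   Any such entry divides n, hence is <= n, so entries are taken in 'I_n.+1
   without loss (for n = 0 there are none, consistently). *)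
Definition dcount (j n : nat) : nat :=
  #|[pred t : j.-tuple 'I_n.+1 |
      all (fun x : 'I_n.+1 => 0 < (x : nat)) t && (\prod_(x <- t) (x : nat) == n)]|.

Definition ccount (j n : nat) : nat :=
  #|[pred t : j.-tuple 'I_n.+1 |
      all (fun x : 'I_n.+1 => 1 < (x : nat)) t && (\prod_(x <- t) (x : nat) == n)]|.

Definition rising (x a : nat) : nat := \prod_(i < a) (x + i).

From mathcomp Require Import all_boot all_order all_algebra.
Import GRing.Theory Num.Theory.

(* Taking p-adic valuations, the ordered factorizations of p^e into j factors
   correspond to the j-tuples of exponents summing to e: d_j(p^e) counts the
   weak compositions of e into j parts, which number C(e + j - 1, j - 1), and
   c_j(p^e) the compositions of e into j positive parts.  Splitting off the
   first part gives recursions for both counts, from which the binomial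
   inversion c_j = sum_m (-1)^(j-m) C(j, m) d_m follows by induction on j.
   Finally d_(k+1)(p^(a+b)) = C(a+b+k, k) = d_(k+1)(p^b) (b+k+1)^(a) / (b+1)^(a). *)

(* [dcount j n] and [ccount j n] are [nfactorizations _ n j n] by conversion. *)
Definition nfactorizations (P : pred nat) (M j N : nat) : nat :=
  #|[pred t : j.-tuple 'I_M.+1 |
      all (fun x : 'I_M.+1 => P x) t && (\prod_(x <- t) (x : nat) == N)]|.

Lemma nfactorizations0 P M N : nfactorizations P M 0 N = (N == 1).
Proof.
rewrite /nfactorizations -sum1_card big_mkcond /=.
rewrite (eq_bigr (fun=> (N == 1 : nat))) => [|t _].
  by rewrite sum_nat_const card_tuple mul1n.
by rewrite tuple0 inE /= big_nil eq_sym; case: (N == 1).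
Qed.

Lemma muln_eq_divn x y N : 0 < N -> (x * y == N) = (x %| N) && (y == N %/ x).
Proof.
move=> N0; apply/eqP/andP => [xyN | [xN /eqP ->]]; last by rewrite mulnC divnK.
have x0 : 0 < x by move: N0; rewrite -xyN muln_gt0 => /andP[].
by rewrite -xyN dvdn_mulr // mulKn.
Qed.

Lemma nfactorizationsS P M j N : 0 < N ->
  nfactorizations P M j.+1 N =
  \sum_(x < M.+1 | P x && (x %| N)) nfactorizations P M j (N %/ x).
Proof.
move=> N0; rewrite /nfactorizations -sum1_card big_mkcond /=.
pose cons_t (u : 'I_M.+1 * j.-tuple 'I_M.+1) := [tuple of u.1 :: u.2].
have cons_bij : bijective cons_t.
  exists (fun t => (thead t, [tuple of behead t])) => [[x s]|t].
    by congr pair; apply: val_inj.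
  by rewrite [RHS]tuple_eta; apply: val_inj.
rewrite (reindex cons_t) /=; last by apply: onW_bij.
set A := [pred t | _].
transitivity (\sum_x \sum_(s : j.-tuple 'I_M.+1) if cons_t (x, s) \in A then 1 else 0).
  by rewrite pair_bigA.
rewrite [RHS]big_mkcond /=; apply: eq_bigr => x _.
rewrite -sum1_card [in RHS]big_mkcond /=.
under eq_bigr do rewrite inE /= big_cons muln_eq_divn //.
case: (P x) (x %| N) => [] [] /=; try by apply: big1 => s _; rewrite ?andbF.
by apply: eq_bigr => s _; rewrite inE.
Qed.

Lemma big_dvdn_pfactor {R : Type} {idx : R} {op : Monoid.com_law idx}
    (F : nat -> R) p e M : prime p -> p ^ e <= M ->
  \big[op/idx]_(x < M.+1 | x %| p ^ e) F x = \big[op/idx]_(f < e.+1) F (p ^ f).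
Proof.
move=> p_pr pe_le_M; have p_gt1 := prime_gt1 p_pr.
rewrite -(big_mkord (op := op) (fun x => x %| p ^ e)) -big_filter.
rewrite -(big_mkord (op := op) xpredT (fun f => F (p ^ f))) -(big_map (expn p) xpredT).
apply: perm_big; apply: uniq_perm; rewrite ?filter_uniq ?iota_uniq //.
  by rewrite map_inj_uniq ?iota_uniq // => m n /eqP; rewrite eqn_exp2l // => /eqP.
move=> x; rewrite mem_filter mem_iota add0n.
apply/andP/mapP => [[/(dvdn_pfactor _ _ p_pr)[f f_le_e ->] _] | [f]].
  by exists f; rewrite // mem_iota.
rewrite mem_iota add0n ltnS => f_le_e ->; split; first by rewrite dvdn_exp2l.
by rewrite ltnS (leq_trans _ pe_le_M) // leq_pexp2l ?prime_gt0.
Qed.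

Fixpoint ncompositions (Q : pred nat) (j e : nat) : nat :=
  if j is j'.+1 then \sum_(f < e.+1 | Q f) ncompositions Q j' (e - f) else (e == 0).

Lemma eq_ncompositions Q1 Q2 : Q1 =1 Q2 -> ncompositions Q1 =2 ncompositions Q2.
Proof.
move=> eqQ j; elim: j => [|j IHj] e //=.
by apply: eq_big => [f|f _]; rewrite ?eqQ ?IHj.
Qed.

Lemma nfactorizations_pfactor P p M j e : prime p -> p ^ e <= M ->
  nfactorizations P M j (p ^ e) = ncompositions (fun f => P (p ^ f)) j e.
Proof.
move=> p_pr; have p_gt1 := prime_gt1 p_pr.
elim: j e => [|j IHj] e pe_le_M.
  by rewrite nfactorizations0 -[1](expn0 p) eqn_exp2l.
rewrite nfactorizationsS ?expn_gt0 ?prime_gt0 // big_mkcondl /=.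
rewrite (big_dvdn_pfactor
  (fun x => if P x then nfactorizations P M j (p ^ e %/ x) else 0)) //.
rewrite [RHS]big_mkcond /=.
apply: eq_bigr => -[f /= f_le_e] _; case: (P _) => //.
rewrite -expnB ?IHj ?prime_gt0 //.
by rewrite (leq_trans _ pe_le_M) // leq_pexp2l ?prime_gt0 ?leq_subr.
Qed.

Definition nweak_compositions := ncompositions xpredT.
Definition npos_compositions := ncompositions (leq 1).

Lemma dcount_pfactor p j e : prime p -> dcount j (p ^ e) = nweak_compositions j e.
Proof.
move=> p_pr; rewrite [LHS](nfactorizations_pfactor (fun x => 0 < x)) //.
by apply: eq_ncompositions => f; rewrite expn_gt0 prime_gt0.
Qed.

Lemma ccount_pfactor p j e : prime p -> ccount j (p ^ e) = npos_compositions j e.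
Proof.
move=> p_pr; rewrite [LHS](nfactorizations_pfactor (fun x => 1 < x)) //.
by apply: eq_ncompositions => f; rewrite -[in 1 < _](expn0 p) ltn_exp2l ?prime_gt1.
Qed.

Lemma nweak_compositions_rec j n :
  nweak_compositions j.+1 n = \sum_(f < n.+1) nweak_compositions j (n - f).
Proof. by []. Qed.

Lemma nweak_compositions0 j : nweak_compositions j 0 = 1.
Proof. by elim: j => // j IHj; rewrite nweak_compositions_rec big_ord1. Qed.

Lemma nweak_compositionsS j n :
  nweak_compositions j.+1 n =
  nweak_compositions j n + \sum_(f < n) nweak_compositions j (n - f.+1).
Proof. by rewrite nweak_compositions_rec big_ord_recl subn0. Qed.

Lemma nweak_compositionsSS j n :
  nweak_compositions j.+1 n.+1 = nweak_compositions j.+1 n + nweak_compositions j n.+1.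
Proof. by rewrite nweak_compositionsS addnC. Qed.

Lemma nweak_compositions_binomial k n : nweak_compositions k.+1 n = 'C(n + k, k).
Proof.
elim: k n => [|k IHk] n.
  elim: n => [|n IHn]; first by rewrite nweak_compositions0.
  by rewrite nweak_compositionsSS IHn !bin0.
elim: n => [|n IHn]; first by rewrite nweak_compositions0 binn.
by rewrite nweak_compositionsSS IHn IHk [in RHS]addSn binS addSnnS.
Qed.

Lemma npos_compositionsS j n :
  npos_compositions j.+1 n = \sum_(f < n) npos_compositions j (n - f.+1).
Proof. by rewrite /npos_compositions /= big_mkcond big_ord_recl. Qed.

Lemma fact_rising x a : x`! * rising x.+1 a = (x + a)`!.
Proof.
elim: a => [|a IHa]; first by rewrite /rising big_ord0 muln1 addn0.
by rewrite /rising big_ord_recr /= mulnA -/(rising _ _) IHa addnS factS mulnC addSn.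
Qed.

Lemma rising_gt0 x a : 0 < x -> 0 < rising x a.
Proof. by move=> x_gt0; rewrite prodn_gt0 // => i; rewrite ltn_addr. Qed.

Lemma bin_fact_add m k : 'C(m + k, k) * (k`! * m`!) = (m + k)`!.
Proof. by rewrite -{2}(addnK k m) bin_fact // leq_addl. Qed.

Lemma bin_rising m a k :
  'C(m + k, k) * rising (m + k).+1 a = 'C(m + a + k, k) * rising m.+1 a.
Proof.
apply/eqP; rewrite -(eqn_pmul2r (_ : 0 < k`! * m`!)) ?muln_gt0 ?fact_gt0 //; apply/eqP.
rewrite mulnAC bin_fact_add fact_rising -mulnA [rising _ _ * _]mulnCA.
by rewrite [rising _ _ * _]mulnC fact_rising bin_fact_add addnAC.
Qed.

Local Open Scope ring_scope.

Lemma sum_signed_binomialS {R : pzRingType} (u : nat -> R) j :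
  \sum_(m < j.+2) (-1) ^+ (j.+1 + m) * 'C(j.+1, m)%:R * u m =
  \sum_(m < j.+1) (-1) ^+ (j + m) * 'C(j, m)%:R * (u m.+1 - u m).
Proof.
have signS i : (-1) ^+ (j + i.+1) = - (-1) ^+ (j + i) :> R.
  by rewrite addnS exprS mulN1r.
have signSS i : (-1) ^+ (j.+1 + i.+1) = (-1) ^+ (j + i) :> R.
  by rewrite addSn exprS signS mulN1r opprK.
under [RHS]eq_bigr do rewrite mulrBr.
rewrite sumrB big_ord_recl /= addn0 bin0 mulr1.
under eq_bigr do rewrite /bump /= add1n signSS binS natrD mulrDr mulrDl.
rewrite big_split /= addrA addrC; congr (_ + _).
rewrite [in RHS]big_ord_recl [in LHS]big_ord_recr /= bin_small //.
rewrite mulr0 mul0r addr0 addn0 bin0 mulr1 opprD.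
congr (_ + _); first by rewrite exprS mulN1r mulNr.
rewrite -sumrN; apply: eq_bigr => i _.
by rewrite /bump /= add1n signS !mulNr opprK.
Qed.

Lemma npos_compositions_inversion {R : pzRingType} j n :
  (npos_compositions j n)%:R =
  \sum_(m < j.+1) (-1) ^+ (j + m) * 'C(j, m)%:R * (nweak_compositions m n)%:R :> R.
Proof.
elim: j n => [|j IHj] n; first by rewrite big_ord1 mulr1 mul1r.
rewrite (sum_signed_binomialS (fun m => (nweak_compositions m n)%:R)).
rewrite npos_compositionsS natr_sum.
under eq_bigr do rewrite IHj.
rewrite exchange_big /=; apply: eq_bigr => m _.
by rewrite -mulr_sumr -natr_sum nweak_compositionsS natrD addrAC subrr add0r.
Qed.

Theorem lemma10 (p j a b : nat) (hp : prime p)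
    (hj : (0 < j)%N) (ha : (0 < a)%N) (hb : (0 < b)%N) :
  (ccount j (p ^ (a + b)))%:R =
  \sum_(k < j)
     (-1) ^+ (j.-1 - k) * ('C(j, k.+1))%:R * (dcount k.+1 (p ^ b))%:R
       * ((rising (b + k + 1) a)%:R / (rising (b + 1) a)%:R) :> rat.
Proof.
rewrite ccount_pfactor // npos_compositions_inversion.
case: j hj => // j _; rewrite big_ord_recl /=.
have -> : nweak_compositions 0 (a + b) = 0%N.
  by rewrite /nweak_compositions /= addn_eq0 eqn0Ngt ha.
rewrite mulr0 add0r; apply: eq_bigr => k _.
rewrite dcount_pfactor // /bump /= add1n !nweak_compositions_binomial.
have sign : (-1) ^+ (j.+1 + k.+1) = (-1) ^+ (j - k) :> rat.
  by rewrite -signr_odd -[RHS]signr_odd addSn addnS /= negbK oddD oddB // -ltnS.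
have binom : 'C(a + b + k, k)%:R =
    'C(b + k, k)%:R * ((rising (b + k + 1) a)%:R / (rising (b + 1) a)%:R) :> rat.
  rewrite mulrA -natrM !addn1 bin_rising [(b + a)%N]addnC natrM mulfK //.
  by rewrite pnatr_eq0 -lt0n rising_gt0.
by rewrite sign binom !mulrA.
Qed.
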